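(* A countable (finite or infinite) graph is $\mathcal{C}$-$\mathrm{HI}$ if and only if it is a disjoint union of copies of a single complete graph.
   Context: Graphs are simple; subgraphs are induced. A homomorphism of graphs maps edges to edges; an automorphism is a bijective endomorphism whose inverse is a homomorphism. A graph $G$ is $\mathcal{C}$-$\mathrm{HI}$ if every homomorphism from a finite connected induced subgraph of $G$ into $G$ extends to an automorphism of $G$. *)

From mathcomp Require Import ssreflect ssrfun ssrbool eqtype ssrnat seq path choice.
Set Implicit Arguments. Unset Strict Implicit. Unset Printing Implicit Defensive.

Definition simple_graph (T : Type) (e : rel T) : Prop :=
  symmetric e /\ irreflexive e.

Definition induced_connected (T : eqType) (e : rel T) (S : seq T) : Prop :=
  forall x y, x \in S -> y \in S ->
    exists p : seq T, [&& path e x p, last x p == y & all (mem S) p].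

Definition hom_on (T : eqType) (e : rel T) (S : seq T) (f : T -> T) : Prop :=
  forall x y, x \in S -> y \in S -> e x y -> e (f x) (f y).

Definition automorphism (T : Type) (e : rel T) (g : T -> T) : Prop :=
  exists2 h : T -> T, cancel g h /\ cancel h g &
    (forall x y, e x y -> e (g x) (g y)) /\ (forall x y, e x y -> e (h x) (h y)).

Definition C_HI (T : eqType) (e : rel T) : Prop :=
  forall (S : seq T) (f : T -> T), induced_connected e S -> hom_on e S f ->
    exists g, automorphism e g /\ {in S, forall x, g x = f x}.

(* G is isomorphic to a disjoint union of copies (indexed by I) of the
   complete graph on K: vertex x corresponds to (copy, position) phi x and
   x ~ y iff they lie in the same copy and are distinct. *)
Definition disjoint_union_of_complete (T : Type) (e : rel T) : Prop :=
  exists (I K : Type) (phi : T -> I * K), bijective phi /\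
    forall x y, e x y <-> ((phi x).1 = (phi y).1 /\ (phi x).2 <> (phi y).2).

(* If G is C-HI, it contains no induced path x ~ y ~ z (the homomorphism
   folding z onto x cannot extend to a bijection), so "equal or adjacent" is an
   equivalence relation whose classes are cliques, and every vertex can be moved
   to every other one by an automorphism; hence all cliques are isomorphic to
   the clique K of a fixed vertex, and G is a disjoint union of copies of K.
   Conversely, a homomorphism from a connected subgraph S of a disjoint union of
   cliques maps S injectively from one copy into one copy, and it extends to the
   automorphism that swaps the two copies and permutes positions. *)

From mathcomp Require Import ssreflect ssrfun ssrbool eqtype seq path choice.
From Stdlib Require Import Classical ClassicalEpsilon.

Set Implicit Arguments.
Unset Strict Implicit.
Unset Printing Implicit Defensive.

Section Transposition.

Context {K : Type}.

Definition swap (a b x : K) : K :=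
  if excluded_middle_informative (x = a) then b
  else if excluded_middle_informative (x = b) then a else x.

Lemma swap_l a b : swap a b a = b.
Proof. by rewrite /swap; case: excluded_middle_informative. Qed.

Lemma swap_r a b : swap a b b = a.
Proof.
rewrite /swap; destruct (excluded_middle_informative (b = a)) as [ba|nba]; first by [].
by case: excluded_middle_informative.
Qed.

Lemma swap_id a b x : x <> a -> x <> b -> swap a b x = x.
Proof.
rewrite /swap => xa xb.
by do 2 case: excluded_middle_informative => // ?.
Qed.

Lemma swapK a b : involutive (swap a b).
Proof.
move=> x; case: (classic (x = a)) => [->|xa]; first by rewrite swap_l swap_r.
case: (classic (x = b)) => [->|xb]; first by rewrite swap_r swap_l.
by rewrite !swap_id.
Qed.

End Transposition.

Lemma partial_bijection_extends (T : eqType) (K : Type) (S : seq T) (al be : T -> K) :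
  {in S &, forall u v, al u = al v <-> be u = be v} ->
  exists p q : K -> K, [/\ cancel p q, cancel q p & {in S, forall u, p (al u) = be u}].
Proof.
elim: S => [|u S IH] alS; first by exists id, id.
have uS : u \in u :: S := mem_head u S.
have [|p [q [pK qK pS]]] := IH; first by move=> a b aS bS; apply: alS; rewrite inE ?aS ?bS orbT.
case: (classic (exists2 v, v \in S & al v = al u)) => [[v vS Ev] | Nv].
  exists p, q; split => // w; rewrite inE => /predU1P [-> | wS]; last exact: pS.
  rewrite -Ev pS //; apply/(alS v u) => //; exact: mem_behead.
exists (swap (p (al u)) (be u) \o p), (q \o swap (p (al u)) (be u)); split.
- by move=> x /=; rewrite swapK pK.
- by move=> x /=; rewrite qK swapK.
move=> w; rewrite inE => /predU1P [-> | wS] /=; first by rewrite swap_l.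
rewrite (pS w wS) swap_id // => E; apply: Nv; exists w => //.
  by apply: (can_inj pK); rewrite pS.
by apply/(alS w u) => //; rewrite inE wS orbT.
Qed.

Section ConnectedSubgraph.

Variables (T : eqType) (e : rel T).

Lemma induced_connected_star (S : seq T) c : symmetric e -> c \in S ->
  {in S, forall a, a != c -> e a c} -> induced_connected e S.
Proof.
move=> esym cS Sc a b aS bS.
case: (eqVneq a c) => [->|ac]; case: (eqVneq b c) => [->|bc].
- by exists [::]; rewrite /= eqxx.
- by exists [:: b]; rewrite /= esym Sc // eqxx bS.
- by exists [:: c]; rewrite /= Sc // eqxx cS.
- by exists [:: c; b]; rewrite /= Sc // esym Sc // eqxx cS bS.
Qed.

Lemma induced_connected_const (U : Type) (S : seq T) (F : T -> U) :
  induced_connected e S -> {in S &, forall a b, e a b -> F a = F b} ->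
  {in S &, forall x y, F x = F y}.
Proof.
move=> Sc FS x y xS yS; have [p /and3P [ep /eqP <- pS]] := Sc x y xS yS.
elim: p x xS ep pS => [|z p IH] x xS //= /andP [exz ep] /andP [zS pS].
by rewrite (FS x z) // IH.
Qed.

End ConnectedSubgraph.

Section CompleteUnionIsC_HI.

Variables (T : eqType) (I K : Type) (e : rel T) (phi : T -> I * K) (phi' : I * K -> T).
Hypotheses (phiK : cancel phi phi') (phiK' : cancel phi' phi)
  (eE : forall x y, e x y <-> (phi x).1 = (phi y).1 /\ (phi x).2 <> (phi y).2).

Definition relabel (tau : I -> I) (p : K -> K) (x : T) : T :=
  phi' (tau (phi x).1, p (phi x).2).

Lemma relabelK tau tau' p q :
  cancel tau tau' -> cancel p q -> cancel (relabel tau p) (relabel tau' q).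
Proof. by move=> tK pK x; rewrite /relabel phiK' /= tK pK -surjective_pairing. Qed.

Lemma relabel_homo tau p : injective p -> {homo relabel tau p : x y / e x y}.
Proof.
move=> p_inj x y /eE [E1 E2]; apply/eE; rewrite /relabel !phiK' /= E1.
by split=> // /p_inj.
Qed.

Lemma relabel_automorphism tau tau' p q : cancel tau tau' -> cancel tau' tau ->
  cancel p q -> cancel q p -> automorphism e (relabel tau p).
Proof.
move=> tK tK' pK qK; exists (relabel tau' q); split; try exact: relabelK.
- exact/relabel_homo/(can_inj pK).
- exact/relabel_homo/(can_inj qK).
Qed.

Lemma same_copy_same_position u v :
  (phi u).1 = (phi v).1 -> (phi u).2 = (phi v).2 -> u = v.
Proof.
move=> E1 E2; rewrite -[u]phiK -[v]phiK; congr phi'.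
exact: injective_projections.
Qed.

Lemma C_HI_complete_union : C_HI e.
Proof.
move=> [|s S'] f Sc fS; first by exists id; split => //; exists id.
set S := s :: S' in Sc fS *.
have sS : s \in S := mem_head s S'.
pose i0 := (phi s).1; pose j0 := (phi (f s)).1.
have copyS u : u \in S -> (phi u).1 = i0 /\ (phi (f u)).1 = j0.
  move=> uS; suff [-> ->] : ((phi u).1, (phi (f u)).1) = (i0, j0) by [].
  apply: (induced_connected_const (F := fun x => ((phi x).1, (phi (f x)).1)) Sc) => //.
  move=> a b aS bS eab /=.
  by case/eE: (eab) => -> _; case/eE: (fS a b aS bS eab) => -> _.
have [|p [q [pK qK pS]]] := @partial_bijection_extends T K S
    (fun x => (phi x).2) (fun x => (phi (f x)).2).
  move=> u v uS vS; have [Hu Hfu] := copyS u uS; have [Hv Hfv] := copyS v vS.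
  split=> [E | Ef]; first by rewrite (same_copy_same_position _ E) // Hu Hv.
  apply: NNPP => N; have euv : e u v by apply/eE; rewrite Hu Hv.
  by case/eE: (fS u v uS vS euv).
exists (relabel (swap i0 j0) p); split.
  by apply: (relabel_automorphism (swapK i0 j0) (swapK i0 j0)) qK.
move=> u uS; have [Hu Hfu] := copyS u uS.
by rewrite /relabel Hu swap_l -Hfu pS // -surjective_pairing phiK.
Qed.

End CompleteUnionIsC_HI.

Lemma complete_union_C_HI (T : eqType) (e : rel T) :
  disjoint_union_of_complete e -> C_HI e.
Proof.
by move=> [I [K [phi [[phi' phiK phiK'] eE]]]]; apply: C_HI_complete_union eE.
Qed.

Section CliqueDecomposition.

Variables (T : choiceType) (e : rel T).
Hypotheses (esym : symmetric e) (eirr : irreflexive e)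
  (etrans : forall x y z, e x y -> e y z -> x != z -> e x z).

Definition same_clique x y := (x == y) || e x y.

Lemma same_clique_refl x : same_clique x x.
Proof. by rewrite /same_clique eqxx. Qed.

Lemma same_clique_sym x y : same_clique x y -> same_clique y x.
Proof. by rewrite /same_clique eq_sym esym. Qed.

Lemma same_clique_trans x y z : same_clique x y -> same_clique y z -> same_clique x z.
Proof.
rewrite /same_clique => /predU1P [-> // | exy] /predU1P [<- | eyz].
  by rewrite exy orbT.
by case: (eqVneq x z) => //= xz; apply: etrans eyz xz.
Qed.

Lemma same_clique_homo (g : T -> T) : {homo g : x y / e x y} ->
  {homo g : x y / same_clique x y}.
Proof.
move=> g_homo x y /predU1P [-> | exy]; first exact: same_clique_refl.
by rewrite /same_clique g_homo ?orbT.
Qed.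

Definition clique_rep x := choose (same_clique x) x.

Lemma same_clique_rep x : same_clique x (clique_rep x).
Proof. exact/chooseP/same_clique_refl. Qed.

Lemma clique_rep_eq x y : same_clique x y <-> clique_rep x = clique_rep y.
Proof.
split=> [xy | Exy].
  have Exy : same_clique x =1 same_clique y.
    move=> z; apply/idP/idP; first exact/same_clique_trans/same_clique_sym.
    exact: same_clique_trans.
  rewrite /clique_rep (eq_choose Exy).
  exact/choose_id/same_clique_refl/same_clique_sym.
apply: same_clique_trans (same_clique_rep x) _.
by rewrite Exy; apply/same_clique_sym/same_clique_rep.
Qed.

Lemma clique_repK x : clique_rep (clique_rep x) = clique_rep x.
Proof. by symmetry; apply/clique_rep_eq/same_clique_rep. Qed.

Variables (x0 : T) (g h : T -> T -> T).
Hypotheses (gK : forall r, cancel (g r) (h r)) (hK : forall r, cancel (h r) (g r))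
  (g_homo : forall r, {homo g r : x y / e x y}) (h_homo : forall r, {homo h r : x y / e x y})
  (g_x0 : forall r, g r x0 = r).

Lemma h_x0 r : h r r = x0.
Proof. by rewrite -{2}(g_x0 r) gK. Qed.

Lemma same_clique_x0_h x : same_clique x0 (h (clique_rep x) x).
Proof.
rewrite -(h_x0 (clique_rep x)).
apply: same_clique_homo; first exact: h_homo.
exact/same_clique_sym/same_clique_rep.
Qed.

Lemma clique_rep_g r k : clique_rep r = r -> same_clique x0 k -> clique_rep (g r k) = r.
Proof.
move=> rr x0k; rewrite -{2}rr; symmetry; apply/clique_rep_eq.
rewrite -{1}(g_x0 r).
exact: same_clique_homo.
Qed.

Theorem clique_decomposition : disjoint_union_of_complete e.
Proof.
exists {r : T | clique_rep r == r}, {k : T | same_clique x0 k}.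
exists (fun x => (exist _ (clique_rep x) (introT eqP (clique_repK x)),
                  exist _ (h (clique_rep x) x) (same_clique_x0_h x))); split.
  exists (fun rk => g (val rk.1) (val rk.2)) => [x | [[r rr] [k x0k]]] /=.
    by rewrite hK.
  have E := clique_rep_g (eqP rr) x0k.
  by apply: injective_projections; apply: val_inj; rewrite /= E ?gK.
move=> x y; split=> [exy | [/(congr1 val) /= Er Eh]].
  have /clique_rep_eq Er : same_clique x y by rewrite /same_clique exy orbT.
  split; first exact: val_inj.
  move=> /(congr1 val) /=; rewrite Er => /(can_inj (hK (clique_rep y))) xy.
  by move: exy; rewrite xy eirr.
have /predU1P [xy | //] : same_clique x y by apply/clique_rep_eq.
by case: Eh; rewrite xy.
Qed.

End CliqueDecomposition.

Lemma C_HI_edge_trans (T : eqType) (e : rel T) : simple_graph e -> C_HI e ->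
  forall x y z, e x y -> e y z -> x != z -> e x z.
Proof.
move=> [esym eirr] HI x y z exy eyz xz; apply: NNPP => nxz.
have yz : y != z by apply: contraTneq eyz => ->; rewrite eirr.
pose f v := if v == z then x else v.
have Sc : induced_connected e [:: x; y; z].
  apply: (@induced_connected_star _ _ _ y esym); first by rewrite !inE eqxx orbT.
  by move=> a; rewrite !inE => /or3P [] /eqP ->; rewrite ?eqxx // => _; rewrite esym.
have fS : hom_on e [:: x; y; z] f.
  move=> u v; rewrite !inE => /or3P [] /eqP -> /or3P [] /eqP -> euv;
    rewrite /f ?eqxx ?(negbTE xz) ?(negbTE yz) //=.
  all: try by rewrite esym.
  all: try by rewrite eirr in euv.
  by case: nxz; rewrite esym.
have [g [[h [gK _] _] gf]] := HI _ f Sc fS.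
have : g x = g z by rewrite !gf ?inE ?eqxx ?orbT // /f eqxx (negbTE xz).
by move/(can_inj gK)/eqP; rewrite (negbTE xz).
Qed.

Lemma C_HI_vertex_transitive (T : eqType) (e : rel T) : irreflexive e -> C_HI e ->
  forall x0 : T, exists g h : T -> T -> T,
    [/\ forall r, cancel (g r) (h r), forall r, cancel (h r) (g r),
        forall r, {homo g r : x y / e x y}, forall r, {homo h r : x y / e x y}
      & forall r, g r x0 = r].
Proof.
move=> eirr HI x0.
have /choice [gh ghP] : forall r, exists gh : (T -> T) * (T -> T),
    [/\ cancel gh.1 gh.2, cancel gh.2 gh.1,
        {homo gh.1 : x y / e x y}, {homo gh.2 : x y / e x y} & gh.1 x0 = r].
  move=> r.
  have Sc : induced_connected e [:: x0].
    by move=> a b; rewrite !inE => /eqP -> /eqP ->; exists [::]; rewrite /= eqxx.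
  have fS : hom_on e [:: x0] (fun=> r).
    by move=> a b; rewrite !inE => /eqP -> /eqP ->; rewrite eirr.
  have [g [[h [gK hK] [g_homo h_homo]] gx0]] := HI _ _ Sc fS.
  by exists (g, h); split=> //; apply: gx0; rewrite inE.
exists (fun r => (gh r).1), (fun r => (gh r).2).
by split=> r; case: (ghP r).
Qed.

Lemma disjoint_union_of_complete_void (T : Type) (e : rel T) :
  (T -> False) -> disjoint_union_of_complete e.
Proof.
move=> NT; exists T, T, (fun x => (x, x)); split; last by move=> x; case: (NT x).
by exists fst => // [[x y]]; case: (NT x).
Qed.

Theorem proposition4p1 (T : countType) (e : rel T) :
  simple_graph e -> (C_HI e <-> disjoint_union_of_complete e).
Proof.
move=> sg; split=> [HI | ]; last exact: complete_union_C_HI.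
have [esym eirr] := sg.
case: (classic (inhabited T)) => [[x0] | NT]; last first.
  by apply: disjoint_union_of_complete_void => x; apply: NT.
have etrans := C_HI_edge_trans sg HI.
have [g [h [gK hK g_homo h_homo gx0]]] := C_HI_vertex_transitive eirr HI x0.
exact: (clique_decomposition esym eirr etrans gK hK g_homo h_homo gx0).
Qed.
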